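(* Let $C$ be a finite set of level constraints in normal form with $\mathcal{I}(C) \cap \mathcal{I}_{fresh} = \emptyset$. If $C; id \leadsto^* \emptyset; \theta$ by a finite sequence of unification steps, then $\theta$ is a most general unifier of $C$: $\theta \vDash C$, and for every level substitution $\tau$ with $\tau \vDash C$ there is a level substitution $\tau'$ such that $i\tau \simeq (i\theta)\tau'$ for all $i \in \mathcal{I}(C)$.
   Context: Levels: $l ::= i \mid \mathtt{z} \mid \mathtt{s}\,l \mid l \sqcup l'$, $i$ in an infinite totally ordered set $\mathcal{I}$ of level variables; $\simeq$ is the smallest congruence (closed under constructors and substitution of levels for variables) containing $i_1 \sqcup (i_2 \sqcup i_3) \approx (i_1 \sqcup i_2) \sqcup i_3$, $i_1 \sqcup i_2 \approx i_2 \sqcup i_1$, $\mathtt{s}(i_1 \sqcup i_2) \approx \mathtt{s}\,i_1 \sqcup \mathtt{s}\,i_2$, $i \sqcup \mathtt{s}\,i \approx \mathtt{s}\,i$, $i \sqcup \mathtt{z} \approx i$, $i \sqcup i \approx i$. Normal form of levels: $\mathtt{s}^k\,\mathtt{z} \sqcup (\sqcup_{i \in V} \mathtt{s}^{n_i}\,i)$ with $V$ a strictly increasing sequence of variables, $n_i \le k$; every $l$ has a unique normal form $\hat l \simeq l$. A constraint $l_1 = l_2$ is in normal form if both sides are in normal form, each variable occurring on both sides has the same exponent on both sides, and at least one exponent (of $\mathtt{z}$ or of a variable, on either side) is $0$; $\widehat{C}$ denotes putting each constraint of $C$ in normal form (normalize both sides, for a variable on both sides drop the occurrence with smaller exponent,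 then subtract the minimum exponent from all exponents). $\theta \vDash C$ means $l_1\theta \simeq l_2\theta$ for all $l_1 = l_2 \in C$. $id$ is the identity substitution. For substitutions: $dom\,\theta = \{i \mid i\theta \ne i\}$; $\mathcal{I}(l)$ is the set of variables of $l$, $\mathcal{I}(C)$ those of $C$; $range\,\theta = \bigcup_{i \in dom\,\theta} \mathcal{I}(i\theta)$; $\mathcal{I}(\theta) = dom\,\theta \cup range\,\theta$; $\widehat{\theta} = \{i \mapsto \widehat{i\theta}\}_{i \in dom\,\theta}$; $\theta\{l/j\} = \{i \mapsto (i\theta)\{l/j\}\}_{i \in dom\,\theta}$; $\mathcal{I}_{fresh} \subsetneq \mathcal{I}$ is a fixed infinite set of fresh variables. In normal-form levels, $\mathtt{z} \sqcup i$ means $\mathtt{s}^0\mathtt{z} \sqcup \mathtt{s}^0 i$, and ''$\mathtt{s}^m\,x \in l$'' means $\mathtt{s}^m\,x$ is a summand of $l$. The unification steps on pairs $C;\theta$ are: (Trivial) $\{l = l\} \cup C; \theta \leadsto C; \theta$. (Orient) $\{l = l'\} \cup C; \theta \leadsto \{l' = l\} \cup C; \theta$ if $l'$ is $\mathtt{z}$ or $\mathtt{z} \sqcup i$. (Eliminate 1) $\{\mathtt{z} \sqcup i = l\} \cup C; \theta \leadsto \widehat{C\{l/i\}}; (\widehat{\theta\{l/i\}}, i \mapsto l)$ if $i$ does not occur in $l$. (Eliminate 2) $\{\mathtt{z} \sqcup i = l\} \cup C; \theta \leadsto \widehat{C\{l'/i\}}; (\widehat{\theta\{l'/i\}}, i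 \mapsto l')$ where $l' = l\{i'/i\}$ for some $i' \in \mathcal{I}_{fresh} \setminus \mathcal{I}(i, l, C, \theta)$, if $\mathtt{s}^0\,i \in l$. (Decompose) $\{\mathtt{z} = \mathtt{z} \sqcup (\sqcup_{i \in V} i)\} \cup C; \theta \leadsto \{\mathtt{z} \sqcup i = \mathtt{z}\}_{i \in V} \cup C; \theta$. (Clash) $\{\mathtt{z} = l\} \cup C; \theta \leadsto \bot$ if $\mathtt{s}^n\,i \in l$ or $\mathtt{s}^n\,\mathtt{z} \in l$ for some $n \ne 0$. *)

From HB Require Import structures.
From mathcomp Require Import all_boot.
Set Implicit Arguments. Unset Strict Implicit. Unset Printing Implicit Defensive.

Inductive level : Type :=
| LVar : nat -> level
| LZ   : level
| LS   : level -> level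
| LMax : level -> level -> level.

Definition level_dec : comparable level.
Proof. move=> x y; rewrite /decidable; decide equality; exact: (decP eqP). Defined.
HB.instance Definition _ := comparableMixin level_dec.

Definition constraint := (level * level)%type.

(** level substitutions: total maps; dom θ = {i | iθ <> i} *)
Definition lsubst := nat -> level.
Definition idsubst : lsubst := fun i => LVar i.

Fixpoint subst (th : lsubst) (l : level) : level :=
  match l with
  | LVar i => th i
  | LZ => LZ
  | LS l => LS (subst th l)
  | LMax a b => LMax (subst th a) (subst th b)
  end.

Definition subst1 (j : nat) (l' : level) (l : level) : level :=
  subst (fun i => if i == j then l' else LVar i) l.

(** * The congruence ≃ : smallest congruence, closed under substitution (axioms
    instantiated at arbitrary levels), containing the six axioms. *)
Inductive lequiv : level -> level -> Prop :=
| lequiv_refl a : lequiv a a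
| lequiv_sym a b : lequiv a b -> lequiv b a
| lequiv_trans a b c : lequiv a b -> lequiv b c -> lequiv a c
| lequiv_S a b : lequiv a b -> lequiv (LS a) (LS b)
| lequiv_Max a a' b b' : lequiv a a' -> lequiv b b' -> lequiv (LMax a b) (LMax a' b')
| ax_assoc a b c : lequiv (LMax a (LMax b c)) (LMax (LMax a b) c)
| ax_comm a b : lequiv (LMax a b) (LMax b a)
| ax_Sdist a b : lequiv (LS (LMax a b)) (LMax (LS a) (LS b))
| ax_succ a : lequiv (LMax a (LS a)) (LS a)
| ax_zero a : lequiv (LMax a LZ) a
| ax_idem a : lequiv (LMax a a) a.

(** atoms of a level: (None, n) for s^n z, (Some i, n) for s^n i (s pushed through ⊔) *)
Fixpoint atoms (l : level) : seq (option nat * nat) :=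
  match l with
  | LVar i => [:: (Some i, 0)]
  | LZ => [:: (None, 0)]
  | LS l => [seq (p.1, p.2.+1) | p <- atoms l]
  | LMax a b => atoms a ++ atoms b
  end.

Definition vars (l : level) : seq nat := pmap fst (atoms l).
Definition varsC (C : seq constraint) : seq nat :=
  flatten [seq vars c.1 ++ vars c.2 | c <- C].

Definition in_dom (th : lsubst) (i : nat) : Prop := th i <> LVar i.
Definition in_range (th : lsubst) (x : nat) : Prop :=
  exists j, in_dom th j /\ x \in vars (th j).

(** * Normal forms  s^k z ⊔ (s^{n_1} i_1 ⊔ (... ⊔ s^{n_m} i_m)) *)
Fixpoint vsum (x : nat * nat) (s : seq (nat * nat)) : level :=
  match s with
  | [::] => iter x.2 LS (LVar x.1)
  | y :: s' => LMax (iter x.2 LS (LVar x.1)) (vsum y s')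
  end.

Definition build (k : nat) (s : seq (nat * nat)) : level :=
  match s with
  | [::] => iter k LS LZ
  | x :: s' => LMax (iter k LS LZ) (vsum x s')
  end.

Definition nf_data (k : nat) (s : seq (nat * nat)) : bool :=
  sorted ltn (unzip1 s) && all (fun p => p.2 <= k) s.

Definition nf_k (l : level) : nat := \max_(p <- atoms l) p.2.
Definition nf_exp (l : level) (i : nat) : nat :=
  \max_(p <- atoms l | p.1 == Some i) p.2.
Definition nf_s (l : level) : seq (nat * nat) :=
  [seq (i, nf_exp l i) | i <- sort leq (undup (vars l))].

Definition lnorm (l : level) : level := build (nf_k l) (nf_s l).

(** summands of a level;  "s^m x ∈ l"  :=  iter m LS x \in summands l *)
Fixpoint summands (l : level) : seq level :=
  match l with
  | LMax a b => summands a ++ summands b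
  | _ => [:: l]
  end.

Definition constraint_nf (c : constraint) : Prop :=
  exists k1 s1 k2 s2,
    [/\ nf_data k1 s1, nf_data k2 s2, c = (build k1 s1, build k2 s2),
        (forall i n m, (i, n) \in s1 -> (i, m) \in s2 -> n = m)
      & [|| k1 == 0, k2 == 0 | has (fun p => p.2 == 0) (s1 ++ s2)]].

(** \hat c : normalize both sides, drop the smaller-exponent occurrence of a
    variable occurring on both sides, subtract the minimum exponent *)
Definition cnorm (c : constraint) : constraint :=
  let k1 := nf_k c.1 in let s1 := nf_s c.1 in
  let k2 := nf_k c.2 in let s2 := nf_s c.2 in
  let s1' := [seq p <- s1 | all (fun q => (q.1 != p.1) || (q.2 <= p.2)) s2] in
  let s2' := [seq p <- s2 | all (fun q => (q.1 != p.1) || (q.2 <= p.2)) s1] in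
  let m := foldr minn k1 (k2 :: [seq p.2 | p <- s1' ++ s2']) in
  let sub := fun p : nat * nat => (p.1, p.2 - m) in
  (build (k1 - m) (map sub s1'), build (k2 - m) (map sub s2')).

Definition chat (C : seq constraint) : seq constraint := map cnorm C.

Definition substC (i : nat) (l : level) (C : seq constraint) : seq constraint :=
  [seq (subst1 i l c.1, subst1 i l c.2) | c <- C].

Definition upd (th : lsubst) (i : nat) (l : level) : lsubst :=
  fun j => if j == i then l
           else if th j == LVar j then LVar j else lnorm (subst1 i l (th j)).

(** * Unification steps. [rule fresh c C th C' th'] : {c} ∪ C; th ~> C'; th'.
    (Clash, leading to ⊥, is irrelevant for derivations ending in ∅.) *)
Inductive rule (fresh : pred nat) :
  constraint -> seq constraint -> lsubst -> seq constraint -> lsubst -> Prop :=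
| R_trivial l C th : rule fresh (l, l) C th C th
| R_orient l l' C th :
    (l' = LZ \/ exists i, l' = LMax LZ (LVar i)) ->
    rule fresh (l, l') C th ((l', l) :: C) th
| R_elim1 i l C th :
    i \notin vars l ->
    rule fresh (LMax LZ (LVar i), l) C th (chat (substC i l C)) (upd th i l)
| R_elim2 i l i' C th :
    fresh i' -> i' != i -> i' \notin vars l -> i' \notin varsC C ->
    ~ in_dom th i' -> ~ in_range th i' ->
    LVar i \in summands l ->
    rule fresh (LMax LZ (LVar i), l) C th
      (chat (substC i (subst1 i (LVar i') l) C)) (upd th i (subst1 i (LVar i') l))
| R_decompose s C th :
    nf_data 0 s -> all (fun p => p.2 == 0) s ->
    rule fresh (LZ, build 0 s) C th ([seq (LMax LZ (LVar p.1), LZ) | p <- s] ++ C) th.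

Definition state := (seq constraint * lsubst)%type.

(** one step on finite sets of constraints (lists up to same elements) *)
Definition step (fresh : pred nat) (st st' : state) : Prop :=
  exists c C, st.1 =i c :: C /\ rule fresh c C st.2 st'.1 st'.2.

Inductive steps (fresh : pred nat) : state -> state -> Prop :=
| steps_refl st : steps fresh st st
| steps_cons st st' st'' : step fresh st st' -> steps fresh st' st'' -> steps fresh st st''.

Definition models (th : lsubst) (C : seq constraint) : Prop :=
  forall c, c \in C -> lequiv (subst th c.1) (subst th c.2).

From mathcomp Require Import all_boot zify.
Set Implicit Arguments. Unset Strict Implicit. Unset Printing Implicit Defensive.

(* Interpret levels in nat (s as successor, ⊔ as max).  Then l ≃ l' holds exactly
   when l and l' agree under every valuation: soundness by induction on ≃, and
   completeness by writing a level as the join of its atoms s^n z and s^n i, and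
   noting that semantic equality forces every atom of one side to lie below an atom
   of the other.

   Each unification step preserves an invariant of D; θ relative to C: the variables
   of D lie outside dom θ, every variable occurs with a single exponent in each side
   of D, θ followed by any solution of D solves C, and every solution of C factors
   (up to ≃, on I(C)) as θ followed by a solution of D.  Normalization preserves
   solutions, and for (Eliminate 2) the single-exponent property makes l{i'/i} a
   fixpoint of l{-/i} because i occurs in l only as the summand s^0 i.  At ∅; θ the
   invariant says that θ is a most general unifier. *)

(** * Semantics of levels *)

Fixpoint leval (rho : nat -> nat) (l : level) : nat :=
  match l with
  | LVar i => rho i
  | LZ => 0
  | LS l => (leval rho l).+1
  | LMax a b => maxn (leval rho a) (leval rho b)
  end.

Definition lsem (a b : level) := forall rho, leval rho a = leval rho b.

Lemma lsem_sym a b : lsem a b -> lsem b a. Proof. by move=> H rho; rewrite H. Qed.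
Lemma lsem_trans b a c : lsem a b -> lsem b c -> lsem a c.
Proof. by move=> H1 H2 rho; rewrite H1 H2. Qed.

Lemma lequiv_sound a b : lequiv a b -> lsem a b.
Proof.
elim=> {a b} //=; try (move=> *; move=> rho /=; lia).
- by move=> a b _ H rho; rewrite H.
- by move=> a b c _ H1 _ H2 rho; rewrite H1 H2.
- by move=> a b _ H rho /=; rewrite H.
- by move=> a a' b b' _ H1 _ H2 rho /=; rewrite H1 H2.
Qed.

Lemma vars_LS l : vars (LS l) = vars l.
Proof. by rewrite /vars /=; elim: (atoms l) => //= -[[i|] n] A ->. Qed.

Lemma vars_LMax a b : vars (LMax a b) = vars a ++ vars b.
Proof. by rewrite /vars /= pmap_cat. Qed.

Lemma subst_comp s t l : subst s (subst t l) = subst (fun j => subst s (t j)) l.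
Proof. by elim: l => //= [l ->|a -> b ->]. Qed.

Lemma eq_subst s t l : s =1 t -> subst s l = subst t l.
Proof. by move=> st; elim: l => //= [l ->|a -> b ->]. Qed.

Lemma eq_in_subst s t l : {in vars l, s =1 t} -> subst s l = subst t l.
Proof.
elim: l => [i|//|l IH|a IHa b IHb] st /=.
- by apply: st; rewrite /vars /= mem_seq1.
- by rewrite IH // => j Hj; apply: st; rewrite vars_LS.
- by rewrite IHa ?IHb // => j Hj; apply: st; rewrite vars_LMax mem_cat Hj ?orbT.
Qed.

Lemma subst_id l : subst idsubst l = l.
Proof. by elim: l => //= [l ->|a -> b ->]. Qed.

Lemma leval_subst rho s l : leval rho (subst s l) = leval (fun j => leval rho (s j)) l.
Proof. by elim: l => //= [l ->|a -> b ->]. Qed.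

Lemma eq_in_leval r r' l : {in vars l, r =1 r'} -> leval r l = leval r' l.
Proof.
elim: l => [i|//|l IH|a IHa b IHb] H /=.
- by apply: H; rewrite /vars /= mem_seq1.
- by rewrite IH // => j Hj; apply: H; rewrite vars_LS.
- by rewrite IHa ?IHb // => j Hj; apply: H; rewrite vars_LMax mem_cat Hj ?orbT.
Qed.

Lemma lsem_subst_in s t l : {in vars l, forall j, lsem (s j) (t j)} ->
  lsem (subst s l) (subst t l).
Proof. by move=> st rho; rewrite !leval_subst; apply: eq_in_leval => j /st. Qed.

Lemma lsem_subst s a b : lsem a b -> lsem (subst s a) (subst s b).
Proof. by move=> ab rho; rewrite !leval_subst. Qed.

Lemma vars_subst s l j :
  j \in vars (subst s l) -> exists2 k, k \in vars l & j \in vars (s k).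
Proof.
elim: l => [i|//|l IH|a IHa b IHb] /=.
- by exists i; rewrite // /vars /= mem_seq1.
- by rewrite vars_LS => /IH [k Hk Hj]; exists k; rewrite ?vars_LS.
- rewrite vars_LMax mem_cat => /orP [/IHa|/IHb] [k Hk Hj]; exists k => //;
  by rewrite vars_LMax mem_cat Hk ?orbT.
Qed.

(** * Completeness of the congruence *)

Definition lle x y := lequiv (LMax x y) y.

Lemma lle_refl x : lle x x. Proof. exact: ax_idem. Qed.

Lemma lle_trans y x z : lle x y -> lle y z -> lle x z.
Proof.
move=> xy yz; apply: (@lequiv_trans _ (LMax x (LMax y z))).
  by apply: lequiv_Max; [apply: lequiv_refl | apply: lequiv_sym].
apply: lequiv_trans (ax_assoc x y z) _; apply: lequiv_trans yz.
by apply: lequiv_Max => //; apply: lequiv_refl.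
Qed.

Lemma lle_max x y z : lle x z -> lle y z -> lle (LMax x y) z.
Proof.
move=> xz yz; apply: (@lequiv_trans _ (LMax x (LMax y z))).
  by apply: lequiv_sym; apply: ax_assoc.
apply: lequiv_trans xz.
by apply: lequiv_Max => //; apply: lequiv_refl.
Qed.

Lemma lle_antisym x y : lle x y -> lle y x -> lequiv x y.
Proof.
move=> xy yx; apply: lequiv_trans xy.
by apply: lequiv_trans (lequiv_sym yx) (ax_comm _ _).
Qed.

Lemma lle_S x y : lle x y -> lle (LS x) (LS y).
Proof. by move=> xy; apply: lequiv_trans (lequiv_sym (ax_Sdist x y)) (lequiv_S xy). Qed.

Lemma lle_iterS n x y : lle x y -> lle (iter n LS x) (iter n LS y).
Proof. by elim: n => //= n IH xy; apply/lle_S/IH. Qed.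

Lemma lle_iter m n x : m <= n -> lle (iter m LS x) (iter n LS x).
Proof.
move/subnKC <-; elim: (n - m) => [|d IH]; first by rewrite addn0; apply: lle_refl.
by apply: lle_trans IH _; rewrite addnS; apply: ax_succ.
Qed.

Lemma lle_Z x : lle LZ x.
Proof. exact: lequiv_trans (ax_comm LZ x) (ax_zero x). Qed.

Fixpoint ljoin (x : level) (r : seq level) : level :=
  if r is y :: r' then LMax x (ljoin y r') else x.

Lemma lle_ljoin x r y : y \in x :: r -> lle y (ljoin x r).
Proof.
elim: r x => [|z r IH] x /=; first by rewrite mem_seq1 => /eqP ->; apply: lle_refl.
have lle_Maxl a b c : lle a c -> lle a (LMax b c).
  move=> ac; apply: (@lequiv_trans _ (LMax (LMax a b) c)); first exact: ax_assoc.
  apply: (@lequiv_trans _ (LMax b (LMax a c))).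
    apply: lequiv_trans (lequiv_sym (ax_assoc _ _ _)).
    by apply: lequiv_Max; [apply: ax_comm | apply: lequiv_refl].
  by apply: lequiv_Max => //; apply: lequiv_refl.
rewrite in_cons => /orP [/eqP ->|/IH]; last exact: lle_Maxl.
apply: lequiv_trans (ax_assoc _ _ _) _.
by apply: lequiv_Max; [apply: ax_idem | apply: lequiv_refl].
Qed.

Lemma ljoin_lle x r y : (forall z, z \in x :: r -> lle z y) -> lle (ljoin x r) y.
Proof.
elim: r x => [|z r IH] x H /=; first by apply: H; rewrite mem_head.
apply: lle_max; first by apply: H; rewrite mem_head.
by apply: IH => w Hw; apply: H; rewrite in_cons Hw orbT.
Qed.

Lemma ljoin_cat x r y r' : lequiv (ljoin x (r ++ y :: r')) (LMax (ljoin x r) (ljoin y r')).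
Proof.
elim: r x => [|z r IH] x /=; first exact: lequiv_refl.
apply: lequiv_trans (ax_assoc _ _ _).
by apply: lequiv_Max => //; apply: lequiv_refl.
Qed.

Lemma ljoin_S x r : lequiv (LS (ljoin x r)) (ljoin (LS x) (map LS r)).
Proof.
elim: r x => [|z r IH] x /=; first exact: lequiv_refl.
apply: lequiv_trans (ax_Sdist _ _) _.
by apply: lequiv_Max => //; apply: lequiv_refl.
Qed.

Definition atom := (option nat * nat)%type.

Definition atom_base (h : option nat) : level :=
  if h is Some i then LVar i else LZ.

Definition atom_level (p : atom) : level := iter p.2 LS (atom_base p.1).

Definition atom_eval rho (p : atom) : nat :=
  (if p.1 is Some i then rho i else 0) + p.2.

Lemma atoms_neq0 l : atoms l != [::].
Proof. by elim: l => //= [l | a IH b _]; [case: (atoms l) | case: (atoms a) IH]. Qed.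

Lemma maxn_bigS (T : Type) (r : seq T) F c :
  maxn c.+1 (\max_(p <- r) (F p).+1) = (maxn c (\max_(p <- r) F p)).+1.
Proof.
elim: r c => [|x r IH] c; first by rewrite !big_nil !maxn0.
by rewrite !big_cons !maxnA maxnSS IH.
Qed.

Lemma leval_atoms rho l : leval rho l = \max_(p <- atoms l) atom_eval rho p.
Proof.
elim: l => [i|||a IHa b IHb] /=.
- by rewrite big_seq1 /atom_eval addn0.
- by rewrite big_seq1.
- move=> l ->; case: (atoms l) (atoms_neq0 l) => // x A _.
  rewrite /= !big_cons big_map -maxn_bigS /atom_eval /= addnS.
  by congr maxn; apply: eq_bigr => -[[i|] n] _ /=; rewrite addnS.
- by rewrite big_cat IHa IHb.
Qed.

Definition join_atoms (A : seq atom) : level :=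
  if A is a :: A' then ljoin (atom_level a) (map atom_level A') else LZ.

Lemma lequiv_join_atoms l : lequiv l (join_atoms (atoms l)).
Proof.
elim: l => [i|||a IHa b IHb] /=; try exact: lequiv_refl.
- move=> l; case: (atoms l) (atoms_neq0 l) => // x A _ IH /=.
  apply: lequiv_trans (lequiv_S IH) _; apply: lequiv_trans (ljoin_S _ _) _.
  by rewrite -!map_comp; apply: lequiv_refl.
- case: (atoms a) (atoms_neq0 a) IHa => // x A _ IHa.
  case: (atoms b) (atoms_neq0 b) IHb => // y B _ IHb /=.
  rewrite map_cat /=; apply: lequiv_trans (lequiv_sym (ljoin_cat _ _ _ _)).
  exact: lequiv_Max.
Qed.

(* [p] is below [q] under every valuation *)
Definition atom_le (p q : atom) := (p.1 = None \/ p.1 = q.1) /\ p.2 <= q.2.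

Lemma atom_le_lle p q : atom_le p q -> lle (atom_level p) (atom_level q).
Proof.
case: p q => [h n] [h' m] [/= hh' nm]; apply: lle_trans (lle_iter _ nm).
case: hh' => [->|->]; last exact: lle_refl.
by apply: lle_iterS; apply: lle_Z.
Qed.

Lemma lle_join_atoms A B : A != [::] -> B != [::] ->
  (forall p, p \in A -> exists2 q, q \in B & atom_le p q) -> lle (join_atoms A) (join_atoms B).
Proof.
case: A => // a A _; case: B => // b B _ AB.
apply: ljoin_lle => z Hz; have /mapP [p Hp ->] : z \in map atom_level (a :: A) by [].
have [q Hq pq] := AB p Hp; apply: lle_trans (atom_le_lle pq) _.
by apply: lle_ljoin; apply: (map_f atom_level Hq).
Qed.

Lemma bigmax_seq_attained (T : eqType) (r : seq T) (P : pred T) F :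
  has P r -> exists2 x, (x \in r) && P x & \max_(y <- r | P y) F y = F x.
Proof.
elim: r => // x r IH; rewrite big_cons /=.
case Px: (P x) => /=; last first.
  by move=> /IH [y /andP [Hy Py] E]; exists y; rewrite // in_cons Hy Py orbT.
case Hr: (has P r); last first.
  by move=> _; exists x; rewrite ?mem_head ?Px // big_hasC ?Hr // maxn0.
have [y /andP [Hy Py] ->] := IH Hr.
case: (leqP (F x) (F y)) => H.
  by exists y; rewrite ?in_cons ?Hy ?Py ?orbT //; apply/maxn_idPr.
by exists x; rewrite ?mem_head ?Px //; apply/maxn_idPl; apply: ltnW.
Qed.

Lemma lsem_atom_le a b : lsem a b ->
  forall p, p \in atoms a -> exists2 q, q \in atoms b & atom_le p q.
Proof.
move=> ab [h n] pa.
(* Raise the variable of [p] above every exponent of [b]: only an atom of [b] with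
   the same variable can then reach the value of [p]. *)
pose N := (\max_(q <- atoms b) q.2).+1.
pose rho j := if h == Some j then N else 0.
have nonempty : has xpredT (atoms b) by case: (atoms b) (atoms_neq0 b).
have [[h' m] /andP [qb _] Eq] := bigmax_seq_attained (atom_eval rho) nonempty.
have le_pq : atom_eval rho (h, n) <= atom_eval rho (h', m).
  rewrite -Eq -leval_atoms -ab leval_atoms.
  exact: (@leq_bigmax_seq _ _ xpredT (atom_eval rho) _ pa).
have mN : m < N by rewrite ltnS (@leq_bigmax_seq _ _ xpredT snd _ qb).
exists (h', m) => //; move: le_pq; rewrite /atom_eval /atom_le /rho /= {qb Eq rho nonempty pa}.
case: h => [i|] /= le_nm; last by split; [left | case: h' le_nm => [j|] /=; lia].
move: le_nm; rewrite eqxx; case: h' => [j|] /=; last by lia.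
by case: (Some i =P Some j) => [->|_]; [split; [right | lia] | lia].
Qed.

Lemma lsem_lequiv a b : lsem a b -> lequiv a b.
Proof.
move=> ab; apply: lequiv_trans (lequiv_join_atoms a) _.
apply: lequiv_trans (lequiv_sym (lequiv_join_atoms b)).
by apply: lle_antisym; apply: lle_join_atoms; rewrite ?atoms_neq0 //;
  apply: lsem_atom_le => //; apply: lsem_sym.
Qed.

Lemma lequiv_lsem a b : lequiv a b <-> lsem a b.
Proof. by split; [apply: lequiv_sound | apply: lsem_lequiv]. Qed.

(** * Normalization preserves solutions *)

Definition leval_data rho k (s : seq (nat * nat)) : nat :=
  maxn k (\max_(p <- s) (rho p.1 + p.2)).

Lemma leval_iter rho n l : leval rho (iter n LS l) = leval rho l + n.
Proof. by elim: n => [|n IH] /=; rewrite ?addn0 ?IH ?addnS. Qed.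

Lemma leval_vsum rho x s :
  leval rho (vsum x s) = maxn (rho x.1 + x.2) (\max_(p <- s) (rho p.1 + p.2)).
Proof.
elim: s x => [|y s IH] x /=; first by rewrite big_nil maxn0 leval_iter.
by rewrite IH big_cons leval_iter.
Qed.

Lemma leval_build rho k s : leval rho (build k s) = leval_data rho k s.
Proof.
case: s => [|x s] /=; first by rewrite /leval_data big_nil maxn0 leval_iter.
by rewrite leval_vsum /leval_data big_cons leval_iter.
Qed.

Lemma in_vars l i : (i \in vars l) = has (fun p => p.1 == Some i) (atoms l).
Proof.
rewrite /vars mem_pmap; apply/mapP/hasP => [[p Hp E]|[p Hp /eqP E]]; last by exists p.
by exists p => //; rewrite E.
Qed.

Lemma leval_nf rho l : leval rho l = leval_data rho (nf_k l) (nf_s l).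
Proof.
rewrite /leval_data /nf_s big_map leval_atoms; apply/eqP; rewrite eqn_leq; apply/andP; split.
- apply/bigmax_leqP_seq => -[[i|] n] Hp _; rewrite /atom_eval /=.
  + have Hi : i \in sort leq (undup (vars l)).
      by rewrite mem_sort mem_undup in_vars; apply/hasP; exists (Some i, n).
    apply: leq_trans (leq_maxr _ _); apply: leq_trans (leq_bigmax_seq _ Hi isT).
    by rewrite leq_add2l (@leq_bigmax_seq _ _ (fun p => p.1 == Some i) snd _ Hp).
  + by apply: leq_trans (leq_maxl _ _); rewrite (@leq_bigmax_seq _ _ xpredT snd _ Hp).
- rewrite geq_max; apply/andP; split.
  + apply/bigmax_leqP_seq => p Hp _; apply: leq_trans (leq_bigmax_seq _ Hp isT).
    exact: leq_addl.
  + apply/bigmax_leqP_seq => i; rewrite mem_sort mem_undup in_vars /nf_exp => Hi _.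
    have [p /andP [Hp /eqP Pp] ->] := bigmax_seq_attained snd Hi.
    by apply: leq_trans (leq_bigmax_seq _ Hp isT); rewrite /atom_eval Pp.
Qed.

Lemma lsem_lnorm l : lsem (lnorm l) l.
Proof. by move=> rho; rewrite /lnorm leval_build leval_nf. Qed.

Definition undominated (s : seq (nat * nat)) (p : nat * nat) :=
  all (fun q => (q.1 != p.1) || (q.2 <= p.2)) s.

Definition shift_down m (p : nat * nat) := (p.1, p.2 - m).

Definition cnorm_data k1 (s1 : seq (nat * nat)) k2 (s2 : seq (nat * nat)) :=
  let s1' := [seq p <- s1 | undominated s2 p] in
  let s2' := [seq p <- s2 | undominated s1 p] in
  let m := foldr minn k1 (k2 :: [seq p.2 | p <- s1' ++ s2']) in
  (build (k1 - m) (map (shift_down m) s1'), build (k2 - m) (map (shift_down m) s2')).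

Lemma cnormE c : cnorm c = cnorm_data (nf_k c.1) (nf_s c.1) (nf_k c.2) (nf_s c.2).
Proof. by []. Qed.

Lemma foldr_minn_leq k r : foldr minn k r <= k /\ {in r, forall x, foldr minn k r <= x}.
Proof.
elim: r => [|y r [IH1 IH2]] //=; split; first exact: leq_trans (geq_minr _ _) IH1.
move=> x; rewrite in_cons => /orP [/eqP ->|Hx]; first exact: geq_minl.
exact: leq_trans (geq_minr _ _) (IH2 _ Hx).
Qed.

Lemma leval_data_shift rho k m s : m <= k -> {in s, forall p, m <= p.2} ->
  leval_data rho (k - m) (map (shift_down m) s) + m = leval_data rho k s.
Proof.
rewrite /leval_data big_map /=; elim: s => [|x s IH] mk ms; first by rewrite !big_nil; lia.
have ms' : {in s, forall p, m <= p.2} by move=> p Hp; apply: ms; rewrite in_cons Hp orbT.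
by rewrite !big_cons; have := IH mk ms'; have := ms x (mem_head _ _); lia.
Qed.

Lemma leval_data_split rho k s (P : pred (nat * nat)) :
  leval_data rho k s =
  maxn (leval_data rho k (filter P s)) (\max_(p <- s | ~~ P p) (rho p.1 + p.2)).
Proof. by rewrite /leval_data (bigID P) /= big_filter maxnA. Qed.

Lemma dominated_lt rho s1 k2 s2 (D := \max_(p <- s1 | ~~ undominated s2 p) (rho p.1 + p.2)) :
  D = 0 \/ D < leval_data rho k2 s2.
Proof.
have : D <= (leval_data rho k2 s2).-1.
  apply/bigmax_leqP_seq => p Hp /allPn [q Hq]; rewrite negb_or negbK -ltnNge.
  case/andP => /eqP qp pq.
  have : rho q.1 + q.2 <= leval_data rho k2 s2.
    exact: leq_trans (@leq_bigmax_seq _ _ xpredT _ _ Hq isT) (leq_maxr _ _).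
  rewrite qp => bound; have : rho p.1 + p.2 < leval_data rho k2 s2.
    by apply: leq_trans bound; rewrite ltn_add2l.
  by case: (leval_data _ _ _).
by case: (leval_data _ _ _) => [|e] /=; [rewrite leqn0 => /eqP; left | right].
Qed.

(* Dropped summands lie strictly below the other side, so they never decide the
   equation; subtracting [m] shifts both sides alike. *)
Lemma leval_cnorm_data rho k1 s1 k2 s2 :
  (leval rho (cnorm_data k1 s1 k2 s2).1 == leval rho (cnorm_data k1 s1 k2 s2).2)
  = (leval_data rho k1 s1 == leval_data rho k2 s2).
Proof.
rewrite /cnorm_data /= !leval_build.
set s1' := filter _ s1; set s2' := filter _ s2; set m := minn k2 _.
have [mk1 mr] : m <= k1 /\ {in k2 :: [seq p.2 | p <- s1' ++ s2'], forall x, m <= x}.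
  exact: (foldr_minn_leq k1 (k2 :: _)).
have mk2 : m <= k2 := mr k2 (mem_head _ _).
have ms p : p \in s1' ++ s2' -> m <= p.2 by move=> Hp; apply: mr; rewrite in_cons map_f ?orbT.
have ms1 : {in s1', forall p, m <= p.2} by move=> p Hp; apply: ms; rewrite mem_cat Hp.
have ms2 : {in s2', forall p, m <= p.2} by move=> p Hp; apply: ms; rewrite mem_cat Hp orbT.
have E1 := leval_data_shift rho mk1 ms1; have E2 := leval_data_shift rho mk2 ms2.
have S1 := leval_data_split rho k1 s1 (undominated s2).
have S2 := leval_data_split rho k2 s2 (undominated s1).
have D1 := dominated_lt rho s1 k2 s2; have D2 := dominated_lt rho s2 k1 s1.
move: E1 E2 S1 S2 D1 D2; rewrite -/s1' -/s2' => E1 E2 S1 S2 D1 D2.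
by apply/idP/idP => /eqP H; apply/eqP; lia.
Qed.

Lemma leval_cnorm rho c :
  (leval rho (cnorm c).1 == leval rho (cnorm c).2) = (leval rho c.1 == leval rho c.2).
Proof. by rewrite cnormE leval_cnorm_data -!leval_nf. Qed.

Lemma lsem_cnorm s c :
  lsem (subst s (cnorm c).1) (subst s (cnorm c).2) <-> lsem (subst s c.1) (subst s c.2).
Proof.
split=> H rho; have := leval_cnorm (fun j => leval rho (s j)) c; rewrite -!leval_subst.
  by rewrite H eqxx => /esym /eqP.
by rewrite H eqxx => /eqP.
Qed.

Lemma atoms_build k s : atoms (build k s) = (None, k) :: [seq (Some p.1, p.2) | p <- s].
Proof.
have atoms_iter n h : atoms (iter n LS (atom_base h)) = [:: (h, n)].
  by elim: n => [|n /= ->]; case: h.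
case: s => [|x s] /=; first exact: (atoms_iter k None).
rewrite (atoms_iter k None) /=; congr cons.
by elim: s x => [|y s IH] x /=; rewrite (atoms_iter _ (Some _)) ?IH.
Qed.

Lemma vars_build k s : vars (build k s) = unzip1 s.
Proof. by rewrite /vars atoms_build /=; elim: s => //= p s ->. Qed.

Definition consistent (l : level) :=
  forall i n m, (Some i, n) \in atoms l -> (Some i, m) \in atoms l -> n = m.

Definition consistent_data (s : seq (nat * nat)) :=
  forall i n m, (i, n) \in s -> (i, m) \in s -> n = m.

Lemma consistent_build k s : consistent_data s -> consistent (build k s).
Proof.
move=> cs i n m; rewrite atoms_build !in_cons /=.
by move=> /mapP [[a b] Hp [-> ->]] /mapP [[c d] Hq [E ->]]; rewrite E in Hp; apply: cs Hp Hq.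
Qed.

Lemma consistent_data_uniq s : uniq (unzip1 s) -> consistent_data s.
Proof.
elim: s => [|[a b] s IH] //= /andP [Ha Hu] i n m; rewrite !in_cons.
case/orP => [/eqP [-> ->]|H1] /orP [/eqP|H2].
- by case=> ->.
- by case/negP: Ha; apply: (map_f fst H2).
- by case=> Ei _; case/negP: Ha; rewrite -Ei; apply: (map_f fst H1).
- exact: IH H1 H2.
Qed.

Lemma consistent_cnorm c : consistent (cnorm c).1 /\ consistent (cnorm c).2.
Proof.
have nf_s_consistent l : consistent_data (nf_s l).
  by move=> i n m /mapP [j _ [-> ->]] /mapP [k _ [-> ->]].
have shift_consistent m P l : consistent_data (map (shift_down m) (filter P (nf_s l))).
  move=> i n k /mapP [[a b] Hp [-> ->]] /mapP [[a' b'] Hq [E ->]] /=.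
  rewrite !mem_filter in Hp Hq; case/andP: Hp => _ Hp; case/andP: Hq => _ Hq.
  by rewrite /= in E; rewrite E in Hp; rewrite (nf_s_consistent l a' b b').
by rewrite cnormE; split; apply: consistent_build; apply: shift_consistent.
Qed.

Lemma vars_cnorm c j : (j \in vars (cnorm c).1 -> j \in vars c.1) /\
                       (j \in vars (cnorm c).2 -> j \in vars c.2).
Proof.
have vars_nf_s l x : x \in unzip1 (nf_s l) -> x \in vars l.
  by rewrite /nf_s /unzip1 -map_comp map_id mem_sort mem_undup.
rewrite cnormE /= !vars_build /unzip1 -!map_comp.
by split=> /mapP [p]; rewrite mem_filter => /andP [_ Hp] ->; apply/vars_nf_s/map_f.
Qed.

Definition solves (s : lsubst) (D : seq constraint) :=
  forall c, c \in D -> lsem (subst s c.1) (subst s c.2).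

Definition assign T (f : nat -> T) i (x : T) : nat -> T := fun j => if j == i then x else f j.

Lemma subst_subst1 s i L l : subst s (subst1 i L l) = subst (assign s i (subst s L)) l.
Proof. by rewrite /subst1 subst_comp; apply: eq_subst => j; rewrite /assign; case: (j == i). Qed.

Lemma vars_subst1 i L l j :
  j \in vars (subst1 i L l) -> (j \in vars l /\ j != i) \/ j \in vars L.
Proof.
move=> /vars_subst [k Hk]; case: (k =P i) => [_|/eqP ne]; first by right.
by rewrite /vars /= mem_seq1 => /eqP ->; left.
Qed.

Lemma in_varsC D j :
  reflect (exists2 c, c \in D & j \in vars c.1 ++ vars c.2) (j \in varsC D).
Proof. exact: flatten_mapP. Qed.

Lemma varsC_chat_substC i L C j : j \in varsC (chat (substC i L C)) ->
  (j \in varsC C /\ j != i) \/ j \in vars L.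
Proof.
case/in_varsC=> _ /mapP [_ /mapP [c cC ->] ->]; rewrite mem_cat => jc.
have [V1 V2] := vars_cnorm (subst1 i L c.1, subst1 i L c.2) j.
have jcC : j \in vars c.1 ++ vars c.2 -> j \in varsC C by move=> jc'; apply/in_varsC; exists c.
by case/orP: jc => [/V1|/V2] /vars_subst1 [[jc' ji]|]; auto; left; split=> //;
  apply: jcC; rewrite mem_cat jc' ?orbT.
Qed.

Lemma solvesW f g D : solves f D -> {in varsC D, forall j, lsem (f j) (g j)} -> solves g D.
Proof.
move=> fD fg c cD.
have fgc j : j \in vars c.1 ++ vars c.2 -> lsem (f j) (g j).
  by move=> Hj; apply: fg; apply/in_varsC; exists c.
apply: lsem_trans (lsem_trans (fD c cD) _).
  by apply: lsem_subst_in => j Hj; apply/lsem_sym/fgc; rewrite mem_cat Hj.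
by apply: lsem_subst_in => j Hj; apply/fgc; rewrite mem_cat Hj orbT.
Qed.

Lemma summands_atoms l x : x \in summands l -> {subset atoms x <= atoms l}.
Proof.
elim: l => [i||l _|a IHa b IHb] /=; try by rewrite mem_seq1 => /eqP ->.
by rewrite mem_cat => /orP [/IHa H|/IHb H] p /H Hp; rewrite mem_cat Hp ?orbT.
Qed.

(* [i] occurs in [l] only as the summand [s^0 i], so [l] evaluates to [max (h i) r]
   with [r] independent of [h i]. *)
Lemma leval_assign_self l i h :
  consistent l -> LVar i \in summands l ->
  leval (assign h i (leval h l)) l = leval h l.
Proof.
move=> cl /summands_atoms il; have i0 : (Some i, 0) \in atoms l by apply: il; rewrite mem_head.
have split_i g : leval g l =
    maxn (g i) (\max_(p <- atoms l | p.1 != Some i) atom_eval g p).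
  rewrite leval_atoms (bigID (fun p => p.1 == Some i)) /=; congr maxn.
  apply/eqP; rewrite eqn_leq; apply/andP; split.
    apply/bigmax_leqP_seq => -[h' n] Hp /eqP /= E; rewrite E in Hp *.
    by rewrite /atom_eval /= (cl _ _ _ Hp i0) addn0.
  by apply: leq_trans (leq_bigmax_seq _ i0 _); rewrite /atom_eval /= ?addn0 ?eqxx.
have rest : \max_(p <- atoms l | p.1 != Some i) atom_eval (assign h i (leval h l)) p =
            \max_(p <- atoms l | p.1 != Some i) atom_eval h p.
  by apply: eq_bigr => -[[j|] n] //= ji; rewrite /atom_eval /assign /= ifN //; apply: contra ji => /eqP ->.
by rewrite [LHS]split_i rest {1}/assign eqxx [leval h l]split_i -maxnA maxnn.
Qed.

Lemma solves_decompose s s0 C : all (fun p => p.2 == 0) s0 ->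
  solves s ((LZ, build 0 s0) :: C) <->
  solves s ([seq (LMax LZ (LVar p.1), LZ) | p <- s0] ++ C).
Proof.
move=> s0_0.
have zero_iff : lsem LZ (subst s (build 0 s0)) <->
    (forall p, p \in s0 -> lsem (LMax LZ (s p.1)) LZ).
  split=> [H p Hp rho | H rho].
    move: (H rho); rewrite /= leval_subst leval_build /leval_data.
    by move=> /esym /eqP; rewrite max0n -leqn0 => /bigmax_leqP_seq/(_ p Hp isT); lia.
  rewrite /= leval_subst leval_build /leval_data.
  apply/esym/eqP; rewrite max0n -leqn0; apply/bigmax_leqP_seq => p Hp _.
  by have := H p Hp rho; move: (allP s0_0 p Hp) => /eqP /= ->; rewrite max0n addn0 => ->.
split=> sol c.
- rewrite mem_cat => /orP [/mapP [p Hp ->]|Hc]; last by apply: sol; rewrite in_cons Hc orbT.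
  by apply/(proj1 zero_iff) => //; apply: (sol (LZ, build 0 s0)); rewrite mem_head.
- rewrite in_cons => /orP [/eqP ->|Hc]; last by apply: sol; rewrite mem_cat Hc orbT.
  apply/zero_iff => p Hp; apply: (sol (LMax LZ (LVar p.1), LZ)).
  by rewrite mem_cat map_f.
Qed.

(** * The invariant of unification *)

Section Invariant.
Variables (fresh : pred nat) (C0 : seq constraint).
Hypothesis C0_not_fresh : forall i, i \in varsC C0 -> ~~ fresh i.

Record invariant (D : seq constraint) (th : lsubst) : Prop := Invariant {
  inv_dom : forall j, j \in varsC D -> th j = LVar j;
  inv_consistent : forall c, c \in D -> consistent c.1 /\ consistent c.2;
  inv_sound : forall s, solves s D -> solves (fun j => subst s (th j)) C0;
  inv_complete : forall tau, solves tau C0 ->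
    exists2 s, solves s D & forall j, j \in varsC C0 -> lsem (tau j) (subst s (th j)) }.

Lemma invariant_equiv D D' th :
  {subset varsC D' <= varsC D} ->
  (forall c, c \in D' -> consistent c.1 /\ consistent c.2) ->
  (forall s, solves s D <-> solves s D') ->
  invariant D th -> invariant D' th.
Proof.
move=> sub cons sol [dom _ sound complete]; split=> //.
- by move=> j /sub; apply: dom.
- by move=> s /sol; apply: sound.
- by move=> tau /complete [s /sol]; exists s.
Qed.

Lemma invariant_elim i l L C th :
  invariant ((LMax LZ (LVar i), l) :: C) th ->
  i \notin vars L -> {in vars L, forall j, th j = LVar j} ->
  lsem L (subst1 i L l) ->
  (* [s'] may move only variables irrelevant to the problem, like the fresh [i'] of
     (Eliminate 2). *)
  (forall s, solves s ((LMax LZ (LVar i), l) :: C) -> exists2 s', lsem (subst s' L) (s i) &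
     forall k, k != i -> [\/ k \in varsC C, k \in varsC C0 | in_range th k] -> s' k = s k) ->
  invariant (chat (substC i L C)) (upd th i L).
Proof.
set c := (LMax LZ (LVar i), l); move=> [dom cons sound complete] iL domL fixL extend.
have thi : th i = LVar i by apply: dom; rewrite /= !mem_cat /vars /= mem_head.
have memD c' : c' \in chat (substC i L C) ->
    exists2 c0, c0 \in C & c' = cnorm (subst1 i L c0.1, subst1 i L c0.2).
  by move=> /mapP [_ /mapP [c0 Hc0 ->] ->]; exists c0.
have solD s' : solves s' (chat (substC i L C)) <->
    solves (assign s' i (subst s' L)) C.
  split=> sol c0 Hc0.
    have := sol _ (map_f cnorm (map_f (fun c => (subst1 i L c.1, subst1 i L c.2)) Hc0)).
    by rewrite lsem_cnorm /= !subst_subst1.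
  by case/memD: Hc0 => c1 Hc1 ->; rewrite lsem_cnorm /= !subst_subst1; apply: sol.
split.
- move=> j /varsC_chat_substC jD; have [ji thj] : j != i /\ th j = LVar j.
    case: jD => [[jC ji] | jL]; last by split; [apply: contraNneq iL => <- | apply: domL].
    by split=> //; apply: dom; rewrite /= !mem_cat jC !orbT.
  by rewrite /upd (negPf ji) thj eqxx.
- by move=> _ /memD [c0 _ ->]; apply: consistent_cnorm.
- move=> s /solD sol; set s' := assign s i (subst s L).
  have sol' : solves s' (c :: C).
    move=> c1; rewrite in_cons => /orP [/eqP ->|/sol //] rho /=.
    by rewrite /s' {1}/assign eqxx -subst_subst1 max0n; apply: lsem_subst.
  apply: solvesW (sound _ sol') _ => j _; rewrite /upd /s'.
  case: (j =P i) => [->|/eqP ji]; first by rewrite thi /= /assign eqxx.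
  case: (th j =P LVar j) => [->|_] /=; first by rewrite /assign (negPf ji).
  by rewrite -subst_subst1; apply/lsem_subst/lsem_sym/lsem_lnorm.
- move=> tau /complete [s sol tau_s]; have [s' s'L s's] := extend s sol.
  exists s'.
  + apply/solD; have solC : solves s C by move=> c1 Hc1; apply: sol; rewrite in_cons Hc1 orbT.
    apply: solvesW solC _ => j jC; rewrite /assign.
    case: (j =P i) => [->|/eqP ji]; first exact: lsem_sym.
    by rewrite s's //; apply: Or31.
  + move=> j jC0; apply: lsem_trans (tau_s j jC0) _; rewrite /upd.
    case: (j =P i) => [->|/eqP ji]; first by rewrite thi; apply: lsem_sym.
    case: (th j =P LVar j) => [->|thj] /=; first by rewrite s's //; apply: Or32.
    apply: lsem_trans _ (lsem_sym (lsem_subst s' (lsem_lnorm _))).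
    rewrite subst_subst1; apply: lsem_subst_in => k Hk; rewrite /assign.
    case: (k =P i) => [->|/eqP ki]; first exact: lsem_sym.
    by rewrite s's //; apply: Or33; exists j.
Qed.

Lemma invariant_trivial l C th : invariant ((l, l) :: C) th -> invariant C th.
Proof.
move=> inv; have [_ cons _ _] := inv; apply: invariant_equiv inv.
- by move=> j jC; rewrite /= !mem_cat jC !orbT.
- by move=> c cC; apply: cons; rewrite in_cons cC orbT.
- split=> sol c cC; first by apply: sol; rewrite in_cons cC orbT.
  by move: cC; rewrite in_cons => /orP [/eqP -> //|]; apply: sol.
Qed.

Lemma invariant_orient l l' C th : invariant ((l, l') :: C) th -> invariant ((l', l) :: C) th.
Proof.
move=> inv; have [_ cons _ _] := inv; apply: invariant_equiv inv.
- by move=> j; rewrite /= !mem_cat => /orP [/orP [] | ] ->; rewrite ?orbT.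
- move=> c; rewrite in_cons => /orP [/eqP -> | cC]; last by apply: cons; rewrite in_cons cC orbT.
  by have [] := cons _ (mem_head _ _).
- have swap a b s : solves s ((a, b) :: C) -> solves s ((b, a) :: C).
    move=> sol c; rewrite in_cons => /orP [/eqP -> | cC]; last by apply: sol; rewrite in_cons cC orbT.
    by apply: lsem_sym; apply: (sol (a, b)); rewrite mem_head.
  by move=> s; split; apply: swap.
Qed.

Lemma invariant_elim1 i l C th :
  i \notin vars l -> invariant ((LMax LZ (LVar i), l) :: C) th ->
  invariant (chat (substC i l C)) (upd th i l).
Proof.
move=> il inv; have [dom _ _ _] := inv; apply: (invariant_elim inv il).
- by move=> j jl; apply: dom; rewrite /= !mem_cat jl !orbT.
- rewrite /subst1 (@eq_in_subst _ idsubst) ?subst_id // => j jl.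
  by rewrite ifN //; apply: contraNneq il => <-.
- move=> s sol; exists s => //; have := sol _ (mem_head _ _).
  by move=> /lsem_sym /lsem_trans; apply => rho /=; rewrite max0n.
Qed.

Lemma invariant_elim2 i l i' C th :
  fresh i' -> i' != i -> i' \notin vars l -> i' \notin varsC C ->
  ~ in_dom th i' -> ~ in_range th i' -> LVar i \in summands l ->
  invariant ((LMax LZ (LVar i), l) :: C) th ->
  invariant (chat (substC i (subst1 i (LVar i') l) C)) (upd th i (subst1 i (LVar i') l)).
Proof.
move=> fresh_i' i'i i'l i'C i'dom i'range il inv; have [dom cons _ _] := inv.
have thi' : th i' = LVar i' by apply/eqP; apply: contraT => /eqP.
set L := subst1 i (LVar i') l.
have varsL j : j \in vars L -> (j \in vars l /\ j != i) \/ j = i'.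
  by case/vars_subst1 => [|]; [left | rewrite /vars /= mem_seq1 => /eqP; right].
apply: (invariant_elim inv) => [|j /varsL [[jl _] | ->] //||s sol].
- by apply/negP => /varsL [[_ /eqP] | /eqP]; rewrite // eq_sym (negPf i'i).
- by apply: dom; rewrite /= !mem_cat jl !orbT.
- move=> rho; pose h := assign rho i (rho i').
  have Lh : leval rho L = leval h l.
    by rewrite leval_subst; apply: eq_in_leval => j _; rewrite /h /assign; case: (j == i).
  rewrite Lh leval_subst -(leval_assign_self h (proj2 (cons _ (mem_head _ _))) il).
  apply: eq_in_leval => j _ /=; rewrite {1}/assign; case: ifP => ji; first by rewrite Lh.
  by rewrite /h /assign ji.
- exists (assign s i' (s i)).
    rewrite subst_subst1 /=; have -> : assign s i' (s i) i' = s i by rewrite /assign eqxx.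
    apply: lsem_trans (_ : lsem (subst s l) _).
      apply: lsem_subst_in => j jl; rewrite /assign; case: (j =P i) => [-> //|_].
      by rewrite ifN //; apply: contraNneq i'l => <-.
    by move=> rho; rewrite -(sol _ (mem_head _ _) rho) /= max0n.
  move=> k _ rel; rewrite /assign ifN //; apply/eqP => ki'; rewrite {k}ki' in rel.
  case: rel => [i'C' | /C0_not_fresh | //]; [by rewrite i'C' in i'C | by rewrite fresh_i'].
Qed.

Lemma invariant_decompose s0 C th : all (fun p => p.2 == 0) s0 ->
  invariant ((LZ, build 0 s0) :: C) th ->
  invariant ([seq (LMax LZ (LVar p.1), LZ) | p <- s0] ++ C) th.
Proof.
move=> s0_0 inv; have [_ cons _ _] := inv.
apply: invariant_equiv inv => [j | c | s]; last exact: solves_decompose.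
- move=> /in_varsC [c]; rewrite mem_cat => /orP [/mapP [p ps0 ->] | cC] jc; last first.
    by rewrite /= mem_cat; apply/orP; right; apply/in_varsC; exists c.
  move: jc; rewrite /= mem_seq1 => /eqP ->.
  by rewrite !mem_cat vars_build map_f.
- rewrite mem_cat => /orP [/mapP [p _ ->] | cC]; last by apply: cons; rewrite in_cons cC orbT.
  by split=> j n m /=; rewrite !inE // => /orP [//|/eqP [_ <-]] /orP [//|/eqP [_ <-]].
Qed.

Lemma rule_invariant c C th D' th' :
  invariant (c :: C) th -> rule fresh c C th D' th' -> invariant D' th'.
Proof.
move=> + r; case: c C th D' th' / r.
- exact: invariant_trivial.
- by move=> l l' C th _; apply: invariant_orient.
- exact: invariant_elim1.
- exact: invariant_elim2.
- by move=> s0 C th _; apply: invariant_decompose.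
Qed.

Lemma steps_invariant st st' :
  steps fresh st st' -> invariant st.1 st.2 -> invariant st'.1 st'.2.
Proof.
elim=> // {}st st1 st2 [c [C [st_cC r]]] _ IH inv; apply/IH/(rule_invariant _ r).
have [_ cons _ _] := inv; apply: invariant_equiv inv => [j|c'|s].
- by case/in_varsC=> c' c'D jc'; apply/in_varsC; exists c'; rewrite ?st_cC.
- by rewrite -st_cC; apply: cons.
- by split=> sol c' c'D; apply: sol; rewrite ?st_cC // -st_cC.
Qed.

Lemma invariant_init : (forall c, c \in C0 -> constraint_nf c) -> invariant C0 idsubst.
Proof.
move=> C0_nf; split=> //.
- move=> c /C0_nf [k1 [s1 [k2 [s2 [/andP [s1_sorted _] /andP [s2_sorted _] -> _ _]]]]].
  by split; apply/consistent_build/consistent_data_uniq/(sorted_uniq ltn_trans ltnn).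
- by move=> tau sol; exists tau.
Qed.

End Invariant.

Theorem mainTheorem11 (fresh : pred nat)
  (fresh_infinite : forall n, exists m, n <= m /\ fresh m)
  (fresh_strict : exists i, ~~ fresh i)
  (C : seq constraint) (theta : lsubst) :
  (forall c, c \in C -> constraint_nf c) ->
  (forall i, i \in varsC C -> ~~ fresh i) ->
  steps fresh (C, idsubst) ([::], theta) ->
  models theta C /\
  (forall tau : lsubst, models tau C ->
     exists tau' : lsubst, forall i, i \in varsC C ->
       lequiv (tau i) (subst tau' (theta i))).
Proof.
move=> C_nf C_not_fresh derivation.
have [_ _ sound complete] := steps_invariant C_not_fresh derivation (invariant_init C_nf).
split=> [c cC | tau tau_C].
- have solved : solves idsubst [::] by [].
  apply/lequiv_lsem; have := sound idsubst solved c cC.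
  by rewrite /= !(@eq_subst _ theta) // => j; rewrite subst_id.
- have [s _ tau_s] := complete tau (fun c cC => proj1 (lequiv_lsem _ _) (tau_C c cC)).
  by exists s => i iC; apply/lequiv_lsem/tau_s.
Qed.
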